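(* Let $X$ be a topological vector space and let $\varphi: X\to\overline{\mathbb{R}}$ be continuous and linear. Then $\varphi$ is finite-valued, i.e. $\varphi(x)\in\mathbb{R}$ for all $x\in X$.
   Context: $\overline{\mathbb{R}}=\mathbb{R}\cup\{-\infty,+\infty\}$ with the order topology (a neighborhood base of $+\infty$ is $\{\{y:y>a\}:a\in\mathbb{R}\}$, of $-\infty$ is $\{\{y:y<a\}:a\in\mathbb{R}\}$). Continuity of $\varphi:X\to\overline{\mathbb{R}}$ is ordinary continuity into this space. $\operatorname{epi}\varphi=\{(x,t)\in X\times\mathbb{R}:\varphi(x)\le t\}$, $\operatorname{hypo}\varphi=\{(x,t)\in X\times\mathbb{R}:\varphi(x)\ge t\}$. A function $\varphi:X\to\overline{\mathbb{R}}$ is called linear if $\operatorname{epi}\varphi$ and $\operatorname{hypo}\varphi$ are convex sets and $\varphi(0)=0$. *)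

From Stdlib Require Import Reals.
Open Scope R_scope.

Inductive Rbar : Type :=
  | Finite : R -> Rbar
  | p_infty : Rbar
  | m_infty : Rbar.

Definition Rbar_le (x y : Rbar) : Prop :=
  match x, y with
  | m_infty, _ => True
  | _, p_infty => True
  | Finite a, Finite b => a <= b
  | _, _ => False
  end.

(** Open sets of Rbar for the order topology: every point has a basic
    neighbourhood inside the set (intervals around finite points,
    {y > a} around +oo, {y < a} around -oo). *)
Definition Rbar_open (U : Rbar -> Prop) : Prop :=
  forall y, U y ->
    match y with
    | Finite r => exists eps, 0 < eps /\
                   forall s, Rabs (s - r) < eps -> U (Finite s)
    | p_infty => exists a, U p_infty /\ forall s, a < s -> U (Finite s)
    | m_infty => exists a, U m_infty /\ forall s, s < a -> U (Finite s)
    end.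

Definition R_open (U : R -> Prop) : Prop :=
  forall r, U r -> exists eps, 0 < eps /\ forall s, Rabs (s - r) < eps -> U s.

(** Real topological vector spaces (no separation axiom required). *)
Record TVS : Type := {
  carrier :> Type;
  vzero : carrier;
  vadd : carrier -> carrier -> carrier;
  vopp : carrier -> carrier;
  vscal : R -> carrier -> carrier;
  vadd_assoc : forall x y z, vadd x (vadd y z) = vadd (vadd x y) z;
  vadd_comm : forall x y, vadd x y = vadd y x;
  vadd_0 : forall x, vadd x vzero = x;
  vadd_opp : forall x, vadd x (vopp x) = vzero;
  vscal_assoc : forall a b x, vscal a (vscal b x) = vscal (a * b) x;
  vscal_1 : forall x, vscal 1 x = x;
  vscal_distr_v : forall a x y, vscal a (vadd x y) = vadd (vscal a x) (vscal a y);
  vscal_distr_s : forall a b x, vscal (a + b) x = vadd (vscal a x) (vscal b x);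
  vopen : (carrier -> Prop) -> Prop;
  vopen_full : vopen (fun _ => True);
  vopen_empty : vopen (fun _ => False);
  vopen_union : forall (I : Type) (F : I -> carrier -> Prop),
      (forall i, vopen (F i)) -> vopen (fun x => exists i, F i x);
  vopen_inter : forall U V, vopen U -> vopen V -> vopen (fun x => U x /\ V x);
  vadd_cont : forall W, vopen W -> forall x y, W (vadd x y) ->
      exists U V, vopen U /\ vopen V /\ U x /\ V y /\
        forall x' y', U x' -> V y' -> W (vadd x' y');
  vscal_cont : forall W, vopen W -> forall a x, W (vscal a x) ->
      exists (A : R -> Prop) U, R_open A /\ vopen U /\ A a /\ U x /\
        forall a' x', A a' -> U x' -> W (vscal a' x')
}.

Definition continuous_Rbar (X : TVS) (phi : X -> Rbar) : Prop :=
  forall U, Rbar_open U -> vopen X (fun x => U (phi x)).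

Definition convex_XR (X : TVS) (S : X -> R -> Prop) : Prop :=
  forall x1 t1 x2 t2 l, S x1 t1 -> S x2 t2 -> 0 <= l <= 1 ->
    S (vadd X (vscal X l x1) (vscal X (1 - l) x2)) (l * t1 + (1 - l) * t2).

Definition epi (X : TVS) (phi : X -> Rbar) : X -> R -> Prop :=
  fun x t => Rbar_le (phi x) (Finite t).

Definition hypo (X : TVS) (phi : X -> Rbar) : X -> R -> Prop :=
  fun x t => Rbar_le (Finite t) (phi x).

Definition linear_Rbar (X : TVS) (phi : X -> Rbar) : Prop :=
  convex_XR X (epi X phi) /\ convex_XR X (hypo X phi) /\ phi (vzero X) = Finite 0.

(** The preimage under [phi] of the open set (-1, 1) is a neighbourhood of
    [0 = phi 0], so by continuity of [t |-> t x] at [t = 0] some point [e x]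
    with [0 < e <= 1] has a finite image. If [phi x] were [+oo], then
    [(x, t/e)] and [(0, 0)] lie in the hypograph for every [t], and their
    convex combination [(e x, t)] shows [phi (e x) >= t] for all [t], i.e.
    [phi (e x) = +oo]; the epigraph excludes [phi x = -oo] in the same way. *)
From Pilot Require Import Defs.
From Stdlib Require Import Reals Lra.
Open Scope R_scope.

Section VectorSpace.
Variable X : TVS.

Lemma vadd_self_eq_zero (y : X) : y = vadd X y y -> y = vzero X.
Proof.
  intro Hy. rewrite <- (vadd_opp X y). rewrite Hy at 2.
  rewrite <- vadd_assoc, vadd_opp, vadd_0. reflexivity.
Qed.

Lemma vscal_zero (c : R) : vscal X c (vzero X) = vzero X.
Proof. apply vadd_self_eq_zero. rewrite <- vscal_distr_v, vadd_0. reflexivity. Qed.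

Lemma vscal0 (x : X) : vscal X 0 x = vzero X.
Proof. apply vadd_self_eq_zero. rewrite <- vscal_distr_s. f_equal. lra. Qed.

Lemma convex_comb_zero (l : R) (x : X) :
  vadd X (vscal X l x) (vscal X (1 - l) (vzero X)) = vscal X l x.
Proof. rewrite vscal_zero, vadd_0. reflexivity. Qed.

Lemma vopen_absorbing (W : X -> Prop) (x : X) :
  vopen X W -> W (vzero X) ->
  exists eps, 0 < eps /\ forall e, Rabs e < eps -> W (vscal X e x).
Proof.
  intros HW HW0.
  rewrite <- (vscal0 x) in HW0.
  destruct (vscal_cont X W HW 0 x HW0) as [A [U [HA [_ [HA0 [HUx HAU]]]]]].
  destruct (HA 0 HA0) as [eps [Heps HAeps]].
  exists eps. split; [exact Heps|]. intros e He.
  apply HAU; [|exact HUx]. apply HAeps. rewrite Rminus_0_r. exact He.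
Qed.

End VectorSpace.

Lemma Rbar_ge_all_p_infty (v : Rbar) :
  (forall t, Rbar_le (Finite t) v) -> v = p_infty.
Proof.
  destruct v as [r| |]; intro Hv; [| reflexivity |].
  - specialize (Hv (r + 1)). simpl in Hv. lra.
  - destruct (Hv 0).
Qed.

Lemma Rbar_le_all_m_infty (v : Rbar) :
  (forall t, Rbar_le v (Finite t)) -> v = m_infty.
Proof.
  destruct v as [r| |]; intro Hv; [| | reflexivity].
  - specialize (Hv (r - 1)). simpl in Hv. lra.
  - destruct (Hv 0).
Qed.

Section ConvexGraph.
Variables (X : TVS) (phi : X -> Rbar).
Hypothesis phi0 : phi (vzero X) = Finite 0.

Lemma hypo_convex_scal_p_infty (x : X) (e : R) :
  convex_XR X (Defs.hypo X phi) -> 0 < e <= 1 ->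
  phi x = p_infty -> phi (vscal X e x) = p_infty.
Proof.
  intros Hconv He Hx. apply Rbar_ge_all_p_infty. intro t.
  assert (Hcomb := Hconv x (t / e) (vzero X) 0 e).
  unfold Defs.hypo in Hcomb. rewrite Hx, phi0, convex_comb_zero in Hcomb.
  replace t with (e * (t / e) + (1 - e) * 0) by (field; lra).
  apply Hcomb; simpl; lra || exact I.
Qed.

Lemma epi_convex_scal_m_infty (x : X) (e : R) :
  convex_XR X (epi X phi) -> 0 < e <= 1 ->
  phi x = m_infty -> phi (vscal X e x) = m_infty.
Proof.
  intros Hconv He Hx. apply Rbar_le_all_m_infty. intro t.
  assert (Hcomb := Hconv x (t / e) (vzero X) 0 e).
  unfold epi in Hcomb. rewrite Hx, phi0, convex_comb_zero in Hcomb.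
  replace t with (e * (t / e) + (1 - e) * 0) by (field; lra).
  apply Hcomb; simpl; lra || exact I.
Qed.

End ConvexGraph.

Definition Rbar_unit_ball (y : Rbar) : Prop :=
  match y with Finite s => Rabs s < 1 | _ => False end.

Lemma Rbar_open_unit_ball : Rbar_open Rbar_unit_ball.
Proof.
  intros [r| |] Hr; simpl in Hr; try contradiction.
  exists (1 - Rabs r). split; [lra|]. intros s Hs. simpl.
  pose proof (Rabs_triang_inv s r). lra.
Qed.

Theorem mainTheorem11 (X : TVS) (phi : X -> Rbar) :
  continuous_Rbar X phi -> linear_Rbar X phi ->
  forall x : X, exists r : R, phi x = Finite r.
Proof.
  intros Hcont [Hepi [Hhypo phi0]] x.
  destruct (vopen_absorbing X _ x (Hcont _ Rbar_open_unit_ball))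
    as [eps [Heps Hball]].
  { rewrite phi0. simpl. rewrite Rabs_R0. lra. }
  set (e := Rmin (eps / 2) 1).
  assert (He : 0 < e <= 1) by (split; [apply Rmin_glb_lt | apply Rmin_r]; lra).
  assert (Hex : Rbar_unit_ball (phi (vscal X e x))).
  { apply Hball. rewrite Rabs_right by lra.
    assert (e <= eps / 2) by apply Rmin_l. lra. }
  destruct (phi x) as [r| |] eqn:Hx.
  - exists r. reflexivity.
  - rewrite (hypo_convex_scal_p_infty X phi phi0 x e Hhypo He Hx) in Hex.
    contradiction.
  - rewrite (epi_convex_scal_m_infty X phi phi0 x e Hepi He Hx) in Hex.
    contradiction.
Qed.
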